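(* Let $m\ge1$ and let $G$ be a strongly regular graph with parameters $P_+(m)$ or $P_-(m)$ and 2-rank $r$. Let $x$ be a vertex of $G$ and let $G'$ be obtained from $G$ by Seidel switching with respect to the set of neighbours of $x$, and let $G''$ be $G'$ with the (isolated) vertex $x$ deleted. Then $G''$ has 2-rank $r-2$ if $\mathbf{1}\in\mathrm{Col}_2(G)$, and 2-rank $r$ otherwise. (When $G''$ is strongly regular with parameters $P_0(m)$, this yields an SRG with parameters $P_0(m)$ of 2-rank $r-2$ or $r$ accordingly.)
   Context: $P_0(m)=(2^{2m}-1,2^{2m-1},2^{2m-2},2^{2m-2})$, $P_\pm(m)=(2^{2m},2^{2m-1}\pm2^{m-1},2^{2m-2}\pm2^{m-1},2^{2m-2}\pm2^{m-1})$. The 2-rank of a graph is the rank over $\mathbb{F}_2$ of its adjacency matrix; $\mathrm{Col}_2(G)$ is the $\mathbb{F}_2$-column space of the adjacency matrix of $G$, and $\mathbf{1}$ is the all-ones vector. Seidel switching with respect to a vertex set $X$ removes all edges between $X$ and its complement and adds all previously absent edges between $X$ and its complement, leaving other adjacencies unchanged. *)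

From HB Require Import structures.
From mathcomp Require Import all_boot all_order all_algebra.
Set Implicit Arguments. Unset Strict Implicit. Unset Printing Implicit Defensive.
Import GRing.Theory.

Definition simple_graph (T : finType) (e : rel T) : Prop :=
  irreflexive e /\ symmetric e.

Definition srg (T : finType) (e : rel T) (p : nat * nat * nat * nat) : Prop :=
  let: (v, k, l, mu) := p in
  [/\ simple_graph e,
      #|T| = v,
      forall x : T, #|[set y | e x y]| = k,
      forall x y : T, x != y -> e x y -> #|[set z | e x z && e y z]| = l
    & forall x y : T, x != y -> ~~ e x y -> #|[set z | e x z && e y z]| = mu].

Definition P0 (m : nat) : nat * nat * nat * nat :=
  (2 ^ (2 * m) - 1, 2 ^ (2 * m - 1), 2 ^ (2 * m - 2), 2 ^ (2 * m - 2)).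
Definition Pplus (m : nat) : nat * nat * nat * nat :=
  (2 ^ (2 * m), 2 ^ (2 * m - 1) + 2 ^ (m - 1),
   2 ^ (2 * m - 2) + 2 ^ (m - 1), 2 ^ (2 * m - 2) + 2 ^ (m - 1)).
Definition Pminus (m : nat) : nat * nat * nat * nat :=
  (2 ^ (2 * m), 2 ^ (2 * m - 1) - 2 ^ (m - 1),
   2 ^ (2 * m - 2) - 2 ^ (m - 1), 2 ^ (2 * m - 2) - 2 ^ (m - 1)).

Definition adjmx2 (T : finType) (e : rel T) : 'M['F_2]_#|T| :=
  \matrix_(i, j) ((e (enum_val i) (enum_val j))%:R)%R.

Definition rank2 (T : finType) (e : rel T) : nat := \rank (adjmx2 e).

(* The all-ones vector lies in the F_2-column space of the adjacency matrix
   (column space of A = row space of A^T). *)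
Definition ones_in_col2 (T : finType) (e : rel T) : bool :=
  submx (const_mx 1%R : 'rV['F_2]_#|T|) (trmx (adjmx2 e)).

Definition seidel (T : finType) (e : rel T) (X : {set T}) : rel T :=
  fun y z => if (y \in X) != (z \in X) then ~~ e y z else e y z.

Definition nbhd (T : finType) (e : rel T) (x : T) : {set T} := [set y | e x y].

Definition delete_vertex (T : finType) (e : rel T) (x : T) : rel {y : T | y != x} :=
  fun y z => e (val y) (val z).
Arguments delete_vertex {T} e x.

From mathcomp Require Import all_boot all_order all_algebra zify.
Set Implicit Arguments. Unset Strict Implicit. Unset Printing Implicit Defensive.
Import GRing.Theory.
Local Open Scope ring_scope.

(* Over F_2, let A be the adjacency matrix, e the unit row vector of x,
   a = e A the row of x and o the all-ones row. Switching with respect to the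
   neighbourhood of x gives A' = A + a^T o + o^T a, and x becomes isolated, so
   deleting it does not change the rank.
   If o is not in the row space of A, some column c has A c = 0 and o c = 1;
   then A' = N^T A N with N = 1 + e^T o, and A N (1 + c o) = A, so A and A'
   have the same rank.
   If o = u A, then A' = A M with M = 1 + e^T o + u^T a, and M kills the two
   independent rows a, o of the row space of A (the alternating form gives
   o u^T = u A u^T = 0), so the rank drops by at least 2; as A' - A has rank
   at most 2, it drops by exactly 2. *)

Lemma Fp2_eq01 (z : 'F_2) : z = 0 \/ z = 1.
Proof.
by case: z => [[|[|k]]] // lt_k; [left | right]; apply: val_inj.
Qed.

Lemma addmx_Fp2 p q (X : 'M['F_2]_(p, q)) : X + X = 0.
Proof.
by apply/matrixP => i j; rewrite !mxE (addrr_pchar2 (pchar_Fp (isT : prime 2))).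
Qed.

Lemma mx11P (R : nmodType) (X Y : 'M[R]_1) : X 0 0 = Y 0 0 -> X = Y.
Proof. by move=> eqXY; rewrite (mx11_scalar X) (mx11_scalar Y) eqXY. Qed.

Lemma trmx11 (R : nmodType) (X : 'M[R]_1) : X^T = X.
Proof. by apply: mx11P; rewrite mxE. Qed.

Lemma mx11_Fp2_neq0 (X : 'M['F_2]_1) : X != 0 -> X = 1%:M.
Proof.
move=> nzX; apply: mx11P; rewrite mxE /=.
by case: (Fp2_eq01 (X 0 0)) => // X00; case/eqP: nzX; apply: mx11P; rewrite X00 mxE.
Qed.

(* Writing A = U + U^T with U strictly upper triangular, v A v^T is a 1x1
   matrix plus its own transpose. *)
Lemma alternating_form0 n (A : 'M['F_2]_n) (v : 'rV['F_2]_n) :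
  A^T = A -> (forall i, A i i = 0) -> v *m A *m v^T = 0.
Proof.
move=> symA diagA.
pose U := \matrix_(i, j) (if (i < j)%N then A i j else 0).
have -> : A = U + U^T.
  apply/matrixP => i j; rewrite !mxE.
  case: (ltngtP i j) => [_|_|eq_ij]; first by rewrite addr0.
    by rewrite add0r -[A in LHS]symA mxE.
  by rewrite (val_inj eq_ij) diagA addr0.
rewrite mulmxDr mulmxDl.
have -> : v *m U^T *m v^T = (v *m U *m v^T)^T by rewrite !trmx_mul trmxK mulmxA.
by rewrite trmx11 addmx_Fp2.
Qed.

Lemma mxrank_add_outer2 (F : fieldType) m n (A : 'M[F]_(m, n))
    (u1 u2 : 'rV[F]_m) (v1 v2 : 'rV[F]_n) :
  (\rank A <= \rank (A + u1^T *m v1 + u2^T *m v2)%R + 2)%N.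
Proof.
have outer_le1 (u : 'rV[F]_m) (v : 'rV[F]_n) : (\rank (- (u^T *m v)) <= 1)%N.
  by rewrite eqmx_opp (leq_trans (mxrankM_maxr _ _)) ?rank_leq_row.
suff rank_sub : forall B : 'M[F]_(m, n),
    (\rank (B - u2^T *m v2 - u1^T *m v1)%R <= \rank B + 2)%N.
  by have := rank_sub (A + u1^T *m v1 + u2^T *m v2); rewrite !addrK.
move=> B; have := outer_le1 u2 v2; have := outer_le1 u1 v1.
have := mxrank_add (B - u2^T *m v2) (- (u1^T *m v1)).
have := mxrank_add B (- (u2^T *m v2)); lia.
Qed.

Lemma cokermx_separates n (A : 'M['F_2]_n) (v : 'rV['F_2]_n) :
  ~~ (v <= A)%MS -> exists2 c : 'cV_n, A *m c = 0 & v *m c = 1%:M.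
Proof.
rewrite submxE => vA.
have [j nz_j] : exists j, col j (v *m cokermx A) != 0.
  apply/existsP; apply: contraR vA; rewrite negb_exists => /forallP col0.
  apply/eqP/matrixP => i k; move/eqP/matrixP/(_ i 0): (negbNE (col0 k)).
  by rewrite !mxE.
exists (col j (cokermx A)); first by rewrite colE mulmxA mulmx_coker mul0mx.
by apply: mx11_Fp2_neq0; rewrite colE mulmxA -colE.
Qed.

Section Switching.

Variables (n : nat) (A : 'M['F_2]_n) (i0 : 'I_n).
Hypotheses (symA : A^T = A) (diagA : forall i, A i i = 0).

Let a := row i0 A.
Let o := const_mx 1 : 'rV['F_2]_n.
Let e := delta_mx 0 i0 : 'rV['F_2]_n.

Definition switch_mx := A + a^T *m o + o^T *m a.

Let aE : a = e *m A. Proof. exact: rowE. Qed.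
Let traE : a^T = A *m e^T. Proof. by rewrite aE trmx_mul symA. Qed.
Let a_e : a *m e^T = 0.
Proof. by apply: mx11P; rewrite trmx_delta -colE !mxE diagA. Qed.
Let o_e : o *m e^T = 1%:M.
Proof. by apply: mx11P; rewrite trmx_delta -colE !mxE. Qed.

Lemma switch_mx_congr : switch_mx = (1%:M + e^T *m o)^T *m A *m (1%:M + e^T *m o).
Proof.
rewrite (raddfD (@trmx _ n n)) /= tr_scalar_mx trmx_mul trmxK.
rewrite mulmxDl mul1mx -mulmxA -aE mulmxDr mulmx1 !mulmxDl.
rewrite mulmxA -traE [o^T *m a *m _]mulmxA -[o^T *m a *m e^T]mulmxA a_e.
by rewrite mulmx0 mul0mx addr0 addrAC.
Qed.

Lemma mxrank_switch_notin : ~~ (o <= A)%MS -> \rank switch_mx = \rank A.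
Proof.
case/cokermx_separates => c Ac o_c.
set N := 1%:M + e^T *m o.
have ANP : A *m (N *m (1%:M + c *m o)) = A.
  have AN : A *m N = A + a^T *m o by rewrite mulmxDr mulmx1 mulmxA traE.
  rewrite mulmxA AN mulmxDr mulmx1 !mulmxDl mulmxA Ac mul0mx add0r.
  by rewrite -mulmxA [o *m _]mulmxA o_c mul1mx -addrA addmx_Fp2 addr0.
have PA'P : (1%:M + c *m o)^T *m switch_mx *m (1%:M + c *m o) = A.
  rewrite switch_mx_congr -!mulmxA ANP mulmxA -trmx_mul.
  by rewrite -{1}symA -trmx_mul ANP symA.
apply/eqP; rewrite eqn_leq; apply/andP; split.
  by rewrite switch_mx_congr (leq_trans (mxrankM_maxl _ _)) ?mxrankM_maxr.
by rewrite -{1}PA'P (leq_trans (mxrankM_maxl _ _)) ?mxrankM_maxr.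
Qed.

Hypothesis nz_a : a != 0.

Lemma mxrank_switch_in_le : (o <= A)%MS -> (\rank switch_mx + 2 <= \rank A)%N.
Proof.
case/submxP => u o_uA.
have Au : A *m u^T = o^T by rewrite -symA -trmx_mul o_uA.
pose M := 1%:M + e^T *m o + u^T *m a.
have AM : A *m M = switch_mx by rewrite /M !mulmxDr mulmx1 !mulmxA -traE Au.
have a_u : a *m u^T = 1%:M.
  by rewrite aE -mulmxA Au -[e]trmxK -trmx_mul o_e trmx1.
have o_u : o *m u^T = 0 by rewrite o_uA alternating_form0.
pose X := col_mx a o.
have X_A : (X <= A)%MS by rewrite col_mx_sub row_sub o_uA submxMl.
have X_kerM : (X <= kermx M)%MS.
  rewrite sub_kermx mul_col_mx /M !mulmxDr !mulmx1 !mulmxA a_e a_u o_u o_e.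
  by rewrite !mul0mx !mul1mx addr0 addmx_Fp2 addr0 addmx_Fp2 col_mx0.
have [y a_y] : exists y, a 0 y = 1.
  have [y nz_y] : exists y, a 0 y != 0.
    apply/existsP; apply: contraR nz_a; rewrite negb_exists => /forallP a0.
    by apply/eqP/matrixP => i k; rewrite (ord1 i) [RHS]mxE; apply/eqP/negbNE.
  by exists y; case: (Fp2_eq01 (a 0 y)) nz_y => ->; rewrite ?eqxx.
(* The columns [y + i0] and [i0] witness that [X] has rank 2. *)
pose C := row_mx (delta_mx y 0 + delta_mx i0 0) (delta_mx i0 0) : 'M['F_2]_(n, 1 + 1).
have XC : X *m C = 1%:M.
  rewrite mul_col_row !mulmxDr -!colE (scalar_mx_block 1 1 1).
  have -> : col y a = 1%:M by apply: mx11P; rewrite !mxE -a_y mxE.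
  have -> : col i0 a = 0 by apply: mx11P; rewrite !mxE diagA.
  have o_col k : col k o = 1%:M by apply: mx11P; rewrite !mxE.
  by rewrite !o_col addr0 addmx_Fp2.
have rankX : (2 <= \rank (A :&: kermx M))%N.
  apply: (@leq_trans (\rank X)); last by apply: mxrankS; rewrite sub_capmx X_A.
  by rewrite -{1}(mxrank1 'F_2 2) -XC mxrankM_maxl.
by rewrite -(mxrank_mul_ker A M) AM leq_add2l.
Qed.

Lemma mxrank_switch_in : (o <= A)%MS -> \rank switch_mx = (\rank A - 2)%N.
Proof.
move=> oA; have := mxrank_switch_in_le oA.
have := mxrank_add_outer2 A a o o a; rewrite -/switch_mx; lia.
Qed.

End Switching.

Lemma adjmx2_seidel_nbhd (T : finType) (e : rel T) (x : T) :
  adjmx2 (seidel e (nbhd e x)) = switch_mx (adjmx2 e) (enum_rank x).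
Proof.
apply/matrixP => p q; rewrite !mxE !big_ord1 !mxE enum_rankK /seidel /nbhd !inE.
by case: (e x (enum_val p)); case: (e x (enum_val q)); case: (e _ _); apply/eqP.
Qed.

Lemma mxrank_rowsub_zero_row (F : fieldType) m m' n (B : 'M[F]_(m, n))
    (f : 'I_m' -> 'I_m) (i0 : 'I_m) :
  row i0 B = 0 -> (forall i, i != i0 -> exists j, f j = i) ->
  \rank (rowsub f B) = \rank B.
Proof.
move=> B_i0 f_onto; apply/eqP; rewrite eqn_leq {1}rowsubE mxrankM_maxr /=.
apply: mxrankS; apply/row_subP => i.
case: (eqVneq i i0) => [->|/f_onto [j <-]]; first by rewrite B_i0 sub0mx.
by rewrite -row_rowsub row_sub.
Qed.

Lemma rank2_delete_isolated (T : finType) (e : rel T) (x : T) :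
  (forall z, e x z = false) -> (forall z, e z x = false) ->
  rank2 (delete_vertex e x) = rank2 e.
Proof.
move=> ex0 e0x.
pose f (i : 'I_#|{: {y : T | y != x}}|) := enum_rank (val (enum_val i)).
have f_onto i : i != enum_rank x -> exists j, f j = i.
  move=> neq_ix; have neq_x : enum_val i != x.
    by apply: contra neq_ix => /eqP <-; rewrite enum_valK.
  exists (enum_rank (exist (fun y => y != x) (enum_val i) neq_x)).
  by rewrite /f enum_rankK /= enum_valK.
rewrite /rank2.
have -> : adjmx2 (delete_vertex e x) = (rowsub f (rowsub f (adjmx2 e))^T)^T.
  by apply/matrixP => i j; rewrite !mxE !enum_rankK.
rewrite mxrank_tr (mxrank_rowsub_zero_row _ f_onto); last first.
  by apply/matrixP => i j; rewrite !mxE !enum_rankK e0x.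
rewrite mxrank_tr (mxrank_rowsub_zero_row _ f_onto) //.
by apply/matrixP => i j; rewrite !mxE !enum_rankK ex0.
Qed.

Lemma srg_Ppm_simple_neighbour (m : nat) (T : finType) (e : rel T) (x : T) :
  (1 <= m)%N -> srg e (Pplus m) \/ srg e (Pminus m) ->
  simple_graph e /\ exists y, e x y.
Proof.
move=> m_ge1 srg_e.
have [simple_e deg_x] : simple_graph e /\ (0 < #|[set z | e x z]|)%N.
  have deg_Pminus : (0 < 2 ^ (2 * m - 1) - 2 ^ (m - 1))%N.
    by rewrite subn_gt0 ltn_exp2l //; lia.
  case: srg_e => -[simple_e _ deg _ _]; split; rewrite // deg //.
  by rewrite addn_gt0 expn_gt0.
by split=> //; case/card_gt0P: deg_x => y; rewrite inE; exists y.
Qed.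

Lemma rank2_seidel_nbhd (T : finType) (e : rel T) (x : T) :
  simple_graph e -> (exists y, e x y) ->
  rank2 (seidel e (nbhd e x)) =
    (if ones_in_col2 e then rank2 e - 2 else rank2 e)%N.
Proof.
move=> [irr_e sym_e] [y e_xy].
have symA : (adjmx2 e)^T = adjmx2 e by apply/matrixP => i j; rewrite !mxE sym_e.
have diagA i : adjmx2 e i i = 0 by rewrite mxE irr_e.
have nz_row : row (enum_rank x) (adjmx2 e) != 0.
  by apply/eqP => /matrixP/(_ 0 (enum_rank y)); rewrite !mxE !enum_rankK e_xy.
rewrite /rank2 adjmx2_seidel_nbhd /ones_in_col2 symA.
case: ifP => [ones_in | /negbT ones_notin].
- exact: mxrank_switch_in.
- exact: mxrank_switch_notin.
Qed.

Local Close Scope ring_scope.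

Theorem mainTheorem8 (m : nat) (T : finType) (e : rel T) (x : T) :
  1 <= m ->
  srg e (Pplus m) \/ srg e (Pminus m) ->
  rank2 (delete_vertex (seidel e (nbhd e x)) x) =
    (if ones_in_col2 e then rank2 e - 2 else rank2 e).
Proof.
move=> m_ge1 /(srg_Ppm_simple_neighbour x m_ge1) [simple_e neighbour_x].
have [irr_e sym_e] := simple_e.
have x_isolated z : seidel e (nbhd e x) x z = false.
  by rewrite /seidel /nbhd !inE irr_e; case: (e x z).
rewrite rank2_delete_isolated ?rank2_seidel_nbhd // => z.
by have := x_isolated z; rewrite /seidel sym_e eq_sym.
Qed.
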